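(* Let $g\ge1$, $n\ge3$, $k\in\{1,\dots,n\}$, and let $y\in A_g^n$ be a point at which $f_k$ attains its minimum on $A_g^n$. Let $i_0$ be the minimal index with $y_{i_0}=y_n$. Then (i) $i_0\le k$; (ii) $y_i>y_{i+1}$ for all $1\le i\le i_0-1$; (iii) $y_1\cdots y_i=g(y_{i+1}+\dots+y_n)$ for all $1\le i\le i_0-1$.
   Context: For $g,n\ge1$, $A_g^n\subseteq\mathbb{R}^n$ is the (compact) set of $(x_1,\dots,x_n)$ with $x_1\ge\dots\ge x_n\ge0$, $x_1+\dots+x_n=1/g$, and $x_1\cdots x_k\le g(x_{k+1}+\dots+x_n)$ for all $k=1,\dots,n-1$. For $1\le k\le n$, $f_k\colon A_g^n\to\mathbb{R}$, $f_k(x)=x_1\cdots x_k$. *)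

From HB Require Import structures.
From mathcomp Require Import all_boot all_order all_algebra.
From mathcomp Require Import reals.
Set Implicit Arguments. Unset Strict Implicit. Unset Printing Implicit Defensive.
Import Order.TTheory GRing.Theory Num.Theory.
Local Open Scope ring_scope.

(* Points of R^n are represented by sequences x : nat -> R, using only the
   coordinates x 1, ..., x n (1-based, as in the paper); other values are
   irrelevant. *)

Definition fk {R : realType} (k : nat) (x : nat -> R) : R :=
  \prod_(1 <= i < k.+1) x i.

Definition inA {R : realType} (g n : nat) (x : nat -> R) : Prop :=
  [/\ (forall i, (1 <= i < n)%N -> x i.+1 <= x i),
      0 <= x n,
      \sum_(1 <= i < n.+1) x i = (g%:R)^-1
    & forall k, (1 <= k < n)%N ->
        fk k x <= g%:R * \sum_(k.+1 <= i < n.+1) x i].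

From HB Require Import structures.
From mathcomp Require Import all_boot all_order all_algebra.
From mathcomp Require Import reals.
From mathcomp Require Import ring lra zify.
Import Order.TTheory GRing.Theory Num.Theory.
Local Open Scope ring_scope.

(* Coordinates of points of A_g^n are positive, and y_j < 1/2 for j >= 2.  A tight constraint
   f_j(y) = g (y_(j+1) + ... + y_n) forces y_(j+1) < y_j, so (ii) follows from (iii).
   Both (i) and (iii) are proved by moving a little mass whenever they fail, producing a point
   of A_g^n with smaller f_k:
   - if i0 > k, lower y_1, ..., y_(i0-1) and raise the flat tail y_i0 = ... = y_n;
   - if i < i0 is the first slack constraint, raise y_i, taking the mass either from the last
     entry of the flat block after y_i or, when that block is the whole tail, from all of it;
     in the latter case the sign of the effect on f_k is unclear, but both directions are
     admissible and f_k(y + t d) f_k(y - t d) < f_k(y)^2.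
   The constraints after the modified entries are recovered one at a time from
   x_(j+1)^2 <= (x_(j+2) + ... + x_n) (1 - x_(j+1)), which holds along flat stretches below 1/2. *)

Set Implicit Arguments. Unset Strict Implicit. Unset Printing Implicit Defensive.

Lemma nonincr_nat_le {disp : Order.disp_t} {T : porderType disp} n (x : nat -> T) :
  (forall i, (1 <= i < n)%N -> (x i.+1 <= x i)%O) ->
  forall a b, (1 <= a <= b)%N -> (b <= n)%N -> (x b <= x a)%O.
Proof.
move=> x_dec a; elim=> [|b IHb] hab hbn; first lia.
have [->|neq_ab] := eqVneq a b.+1; first exact: lexx.
by apply: le_trans (x_dec b _) (IHb _ _); lia.
Qed.

Lemma nonincr_flat_or_drop {disp : Order.disp_t} {T : porderType disp} (x : nat -> T) a b :
  (forall i, (a <= i < b)%N -> (x i.+1 <= x i)%O) ->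
  (forall m, (a <= m <= b)%N -> x m = x a) \/
  exists2 e, (a <= e < b)%N & (forall m, (a <= m <= e)%N -> x m = x a) /\ (x e.+1 < x e)%O.
Proof.
elim: b => [|b IHb] x_dec; first by left => m hm; have -> : m = a by lia.
have [flat|drop] := IHb (fun i hi => x_dec i ltac:(lia)); last first.
  by case: drop => e he flat_e; right; exists e => //; lia.
have [ab|ba] := leqP a b; last by left => m hm; have -> : m = a by lia.
have [eq_b|neq_b] := eqVneq (x b.+1) (x b).
  left => m hm; case: (ltngtP m b.+1) => [hmb||->]; [apply: flat; lia | lia |].
  by rewrite eq_b flat //; lia.
right; exists b; first lia.
by split=> //; rewrite lt_neqAle neq_b x_dec //; lia.
Qed.

Lemma sumr_nat_const_in (V : nmodType) lo hi (F : nat -> V) c :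
  (forall m, (lo <= m < hi)%N -> F m = c) -> \sum_(lo <= m < hi) F m = c *+ (hi - lo).
Proof. by move=> Fc; rewrite (eq_big_nat _ _ Fc) sumr_const_nat. Qed.

Lemma sumr_nat_eq1 (R : pzSemiRingType) lo hi p :
  \sum_(lo <= m < hi) ((m == p)%:R : R) = ((lo <= p) && (p < hi))%N%:R.
Proof.
elim: hi => [|hi IHhi]; first by rewrite big_geq // ltn0 andbF.
have [lohi|hilo] := leqP lo hi; last by rewrite big_geq //; case: andP => //; lia.
rewrite big_nat_recr //= IHhi; have [->|neq_p] := eqVneq p hi.
  by rewrite ltnn lohi ltnSn /= add0r.
by rewrite addr0 ltnS [(p <= hi)%N]leq_eqVlt (negbTE neq_p).
Qed.

Lemma prodr_nat_D2 (R : comPzSemiRingType) lo hi i e (F : nat -> R) :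
  (lo <= i < hi)%N -> (lo <= e < hi)%N -> i != e ->
  \prod_(lo <= m < hi) F m = F i * F e * \prod_(lo <= m < hi | (m != i) && (m != e)) F m.
Proof.
move=> hi' he neq_ie.
have i_in : i \in index_iota lo hi by rewrite mem_index_iota.
rewrite (bigD1_seq i i_in (iota_uniq _ _)) -mulrA; congr (_ * _).
rewrite big_mkcond (bigD1_seq e _ (iota_uniq _ _)) ?mem_index_iota //= eq_sym neq_ie.
congr (_ * _); rewrite [RHS](eq_bigl (fun m => (m != e) && (m != i))) ?big_mkcondr //.
by move=> m; rewrite andbC.
Qed.

Section NumRanges.
Variable R : numDomainType.
Implicit Types x z : nat -> R.

Lemma sumr_nat_ge0 lo hi x : (forall m, (lo <= m < hi)%N -> 0 <= x m) ->
  0 <= \sum_(lo <= m < hi) x m.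
Proof. by move=> x_ge0; rewrite big_nat_cond; apply: sumr_ge0 => m /andP[/x_ge0]. Qed.

Lemma prodr_nat_ge0 lo hi x : (forall m, (lo <= m < hi)%N -> 0 <= x m) ->
  0 <= \prod_(lo <= m < hi) x m.
Proof. by move=> x_ge0; rewrite big_nat_cond; apply: prodr_ge0 => m /andP[/x_ge0]. Qed.

Lemma prodr_nat_gt0 lo hi x : (forall m, (lo <= m < hi)%N -> 0 < x m) ->
  0 < \prod_(lo <= m < hi) x m.
Proof. by move=> x_gt0; rewrite big_nat_cond; apply: prodr_gt0 => m /andP[/x_gt0]. Qed.

Lemma prodr_nat_lt lo hi p x z : (lo <= p < hi)%N ->
  (forall m, (lo <= m < hi)%N -> 0 <= x m <= z m) ->
  (forall m, (lo <= m < hi)%N -> 0 < z m) -> x p < z p ->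
  \prod_(lo <= m < hi) x m < \prod_(lo <= m < hi) z m.
Proof.
move=> hp le_xz z_gt0 lt_p.
have p_in : p \in index_iota lo hi by rewrite mem_index_iota.
rewrite (bigD1_seq p p_in (iota_uniq _ _)) [X in _ < X](bigD1_seq p p_in (iota_uniq _ _)) /=.
rewrite big_seq_cond [X in _ < _ * X]big_seq_cond.
set P := (fun m => (m \in index_iota lo hi) && (m != p)).
have le_rest : \prod_(m <- index_iota lo hi | P m) x m <= \prod_(m <- index_iota lo hi | P m) z m.
  by apply: ler_prod => m /andP[]; rewrite mem_index_iota => /le_xz.
have rest_gt0 : 0 < \prod_(m <- index_iota lo hi | P m) z m.
  by apply: prodr_gt0 => m /andP[]; rewrite mem_index_iota => /z_gt0.
have /andP[xp_ge0 _] := le_xz _ hp.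
by apply: le_lt_trans (ler_wpM2l xp_ge0 le_rest) _; rewrite ltr_pM2r.
Qed.

End NumRanges.

Lemma ler_mul_norm (R : realDomainType) (t s K : R) : 0 <= K -> `|t| <= s -> t * K <= s * K.
Proof. by move=> K_ge0 ts; apply: ler_wpM2r => //; apply: le_trans (ler_norm t) ts. Qed.

Section NearZero.
Variable R : realFieldType.
Implicit Types P Q : R -> Prop.

Definition near0 P := exists2 e : R, 0 < e & forall s, 0 <= s <= e -> P s.

Lemma near0_and P Q : near0 P -> near0 Q -> near0 (fun s => P s /\ Q s).
Proof.
move=> [e1 e1_gt0 P_e1] [e2 e2_gt0 Q_e2]; exists (Num.min e1 e2); first by rewrite lt_min e1_gt0.
by move=> s /andP[s_ge0]; rewrite le_min => /andP[se1 se2]; split; [apply: P_e1 | apply: Q_e2];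
  rewrite s_ge0.
Qed.

Lemma near0_impl (b : bool) P : (b -> near0 P) -> near0 (fun s => b -> P s).
Proof.
case: b => [/(_ isT) [e e_gt0 P_e]|_]; first by exists e => // s /P_e.
by exists 1 => //; rewrite ltr01.
Qed.

Lemma near0_mulr_le (K gap : R) : 0 <= K -> 0 < gap -> near0 (fun s => s * K <= gap).
Proof.
move=> K_ge0 gap_gt0; exists (gap / (K + 1)); first by rewrite divr_gt0 // ltr_wpDl.
move=> s /andP[s_ge0 se]; have K1_gt0 : 0 < K + 1 by rewrite ltr_wpDl.
apply: le_trans (_ : s * (K + 1) <= gap); first by rewrite ler_wpM2l // lerDl.
by rewrite -ler_pdivlMr.
Qed.

Lemma near0_le (gap : R) : 0 < gap -> near0 (fun s => s <= gap).
Proof.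
move=> gap_gt0; have [e e_gt0 small] := near0_mulr_le ler01 gap_gt0.
by exists e => // s /small; rewrite mulr1.
Qed.

Lemma near0_witness P : near0 P -> exists2 e, 0 < e & P e.
Proof. by move=> [e e_gt0 P_e]; exists e => //; apply: P_e; rewrite lexx ltW. Qed.

End NearZero.

Section Constraints.
Variables (R : realType) (g n : nat).
Implicit Types x y d : nat -> R.

(* [lia] gets exponentially slower with each real hypothesis in the context. *)
Local Ltac nat_lia := repeat match goal with H : context [R] |- _ => clear H end; lia.

Definition tail j x := \sum_(j.+1 <= m < n.+1) x m.
Definition constraint j x := fk j x <= g%:R * tail j x.
Definition minimizes_fk k y := forall x, inA g n x -> fk k y <= fk k x.
Definition perturb y t d m := y m + t * d m.

Lemma fkS j x : fk j.+1 x = fk j x * x j.+1.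
Proof. by rewrite /fk big_nat_recr. Qed.

Lemma tailS j x : (j < n)%N -> tail j x = x j.+1 + tail j.+1 x.
Proof. by move=> jn; rewrite /tail big_ltn. Qed.

Lemma tail_ge_next j x : (j < n)%N -> (forall m, (j.+1 < m <= n)%N -> 0 <= x m) ->
  x j.+1 <= tail j x.
Proof.
move=> jn x_ge0; rewrite tailS // lerDl; apply: sumr_nat_ge0 => m hm; apply: x_ge0; nat_lia.
Qed.

Lemma inA_ge0 x m : inA g n x -> (1 <= m <= n)%N -> 0 <= x m.
Proof.
by case=> x_dec xn_ge0 _ _ hm; apply: le_trans xn_ge0 (nonincr_nat_le x_dec _ _); nat_lia.
Qed.

Lemma sum_perturb y t d : \sum_(1 <= m < n.+1) d m = 0 ->
  \sum_(1 <= m < n.+1) perturb y t d m = \sum_(1 <= m < n.+1) y m.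
Proof. by move=> d_sum0; rewrite big_split /= -mulr_sumr d_sum0 mulr0 addr0. Qed.

Lemma tail_perturb j y t d : (j <= n)%N -> \sum_(1 <= m < n.+1) d m = 0 ->
  tail j (perturb y t d) = tail j y - t * \sum_(1 <= m < j.+1) d m.
Proof.
move=> jn d_sum0.
have tail_d : tail j d = - \sum_(1 <= m < j.+1) d m.
  by apply/eqP; rewrite -addr_eq0 addrC /tail -big_cat_nat ?d_sum0.
by rewrite /tail /perturb big_split /= -mulr_sumr -/(tail j d) tail_d mulrN.
Qed.

Lemma constraintS j x : (j < n)%N -> 0 <= x j.+1 -> constraint j x ->
  x j.+1 ^+ 2 <= tail j.+1 x * (1 - x j.+1) -> constraint j.+1 x.
Proof.
rewrite /constraint fkS => jn x_ge0 cj step; rewrite tailS // in cj.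
apply: le_trans (ler_wpM2r x_ge0 cj) _.
have -> : g%:R * (x j.+1 + tail j.+1 x) * x j.+1 =
  g%:R * (x j.+1 ^+ 2 + tail j.+1 x * x j.+1) by ring.
rewrite mulrBr mulr1 in step; apply: ler_wpM2l; rewrite ?ler0n //; lra.
Qed.

Lemma constraint_propagate j0 hi x : (hi <= n)%N -> constraint j0 x ->
  (forall j, (j0 < j < hi)%N -> 0 <= x j /\ x j ^+ 2 <= tail j x * (1 - x j)) ->
  forall j, (j0 <= j < hi)%N -> constraint j x.
Proof.
move=> hin c_j0 step; elim=> [|j IHj] hj; first by move: c_j0; have -> : j0 = 0%N by nat_lia.
have [<- //|neq] := eqVneq j0 j.+1.
have [x_ge0 step_j] := step j.+1 ltac:(nat_lia).
by apply: constraintS => //; [nat_lia | apply: IHj; nat_lia].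
Qed.

Lemma constraint_flat_tail p c x : constraint p x -> (forall m, (p < m <= n)%N -> x m = c) ->
  0 <= c -> 2 * c <= 1 -> forall j, (p <= j < n)%N -> constraint j x.
Proof.
move=> c_p flat c_ge0 c_half; apply: constraint_propagate c_p _ => // j hj.
have c_le_tail : c <= tail j x.
  rewrite -(flat j.+1); last nat_lia.
  by apply: tail_ge_next => [|m hm]; [nat_lia | rewrite flat //; nat_lia].
rewrite flat; last nat_lia.
by split => //; nra.
Qed.

Section PointsOfA.
Hypotheses (g_ge1 : (1 <= g)%N) (n_ge3 : (3 <= n)%N).
Variable y : nat -> R.
Hypothesis yA : inA g n y.

Let y_nonincr i : (1 <= i < n)%N -> y i.+1 <= y i.
Proof. by case: yA => y_dec _ _ _; apply: y_dec. Qed.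

Let y_sum : \sum_(1 <= m < n.+1) y m = g%:R^-1.
Proof. by case: yA. Qed.

Let y_constraint j : (1 <= j < n)%N -> constraint j y.
Proof. by case: yA => _ _ _ y_cstr; apply: y_cstr. Qed.

Let g_gt0 : 0 < g%:R :> R.
Proof. by rewrite ltr0n. Qed.

Lemma inA_gt0 m : (1 <= m <= n)%N -> 0 < y m.
Proof.
elim: m => [|j IHj] hj; first nat_lia.
have tail_gt0 : 0 < tail j y.
  case: j IHj hj => [|j] IHj hj; first by rewrite /tail y_sum invr_gt0.
  have fk_gt0 : 0 < fk j.+1 y.
    apply: prodr_nat_gt0 => m hm.
    by apply: lt_le_trans (IHj _) (nonincr_nat_le y_nonincr _ _); nat_lia.
  by have := lt_le_trans fk_gt0 (y_constraint _); rewrite pmulr_rgt0 //; apply; nat_lia.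
have tail_le : tail j y <= y j.+1 *+ (n.+1 - j.+1).
  rewrite /tail -sumr_const_nat; apply: ler_sum_nat => m hm /=.
  apply: (nonincr_nat_le y_nonincr); nat_lia.
rewrite ltNge; apply/negP => y_le0.
by have := le_trans tail_le (mulrn_wle0 _ y_le0); rewrite leNgt tail_gt0.
Qed.

Let y_ge0_after j m : (j < m <= n)%N -> 0 <= y m.
Proof. by move=> hm; apply/ltW/inA_gt0; nat_lia. Qed.

Lemma inA_lt_half j : (2 <= j <= n)%N -> 2 * y j < 1.
Proof.
move=> hj; have head3 : y 1 + y 2 + y 3 <= g%:R^-1.
  rewrite -y_sum -/(tail 0 y) (tailS (j := 0)) ?(tailS (j := 1)); try nat_lia.
  by rewrite addrA lerD2l; apply: tail_ge_next => [|m]; [nat_lia | apply: y_ge0_after].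
have ginv_le1 : g%:R^-1 <= 1 :> R by rewrite invf_le1 // ler1n.
have y3_gt0 : 0 < y 3 by apply: inA_gt0; nat_lia.
have y2_le1 : y 2 <= y 1 by apply: y_nonincr; nat_lia.
have yj_le2 : y j <= y 2 by apply: (nonincr_nat_le y_nonincr); nat_lia.
lra.
Qed.

(* A tight constraint forces a strict descent: with [y_(j+1) = y_j = a] the (j-1)-th
   constraint would give [tail_j (1 - a) <= a^2], while [tail_j >= a] and [2 a < 1]. *)
Lemma inA_tight_lt j : (1 <= j < n)%N -> fk j y = g%:R * tail j y -> y j.+1 < y j.
Proof.
move=> hj tight; rewrite lt_neqAle y_nonincr // andbT; apply/eqP => flat.
have a_le_tail : y j.+1 <= tail j y by apply: tail_ge_next => [|m]; [nat_lia | apply: y_ge0_after].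
case: j hj tight flat a_le_tail => [|[|j]] hj tight flat a_le_tail; first nat_lia.
  rewrite /fk big_nat1 tailS // in tight; rewrite tailS // in a_le_tail.
  have T_gt0 : 0 < tail 2 y.
    apply: lt_le_trans (tail_ge_next _ _) => [||m];
      [apply: inA_gt0; nat_lia | nat_lia | exact: y_ge0_after].
  have y2_gt0 : 0 < y 2 by apply: inA_gt0; nat_lia.
  have : y 2 + tail 2 y <= g%:R * (y 2 + tail 2 y) by rewrite ler_peMl ?ler1n //; lra.
  lra.
have a_gt0 : 0 < y j.+2 by apply: inA_gt0; nat_lia.
have a_half : 2 * y j.+2 < 1 by apply: inA_lt_half; nat_lia.
have prev := y_constraint (j := j.+1) ltac:(nat_lia).
rewrite /constraint tailS in prev; last nat_lia.
rewrite fkS in tight; rewrite flat in a_le_tail.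
have : g%:R * tail j.+2 y <= g%:R * ((y j.+2 + tail j.+2 y) * y j.+2).
  by rewrite -tight mulrA ler_wpM2r ?(ltW a_gt0).
rewrite ler_pM2l // => T_le; nra.
Qed.

Section LowerHead.
Variables (k p : nat).
Hypotheses (k_ge1 : (1 <= k)%N) (kp : (k <= p)%N) (pn : (p < n)%N).
Hypothesis y_flat : forall m, (p < m <= n)%N -> y m = y n.

Local Notation q := (p%:R / (n - p)%:R : R).
Local Notation d := (fun m => if (m <= p)%N then -1 else q).

Let q_ge0 : 0 <= q. Proof. by rewrite divr_ge0 ?ler0n. Qed.

Let prefix_d j : (j <= p)%N -> \sum_(1 <= m < j.+1) d m = - j%:R.
Proof.
move=> jp; rewrite (sumr_nat_const_in (c := -1)) => [|m hm]; last by rewrite ifT //; nat_lia.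
by rewrite subn1 mulNrn.
Qed.

Let sum_d : \sum_(1 <= m < n.+1) d m = 0.
Proof.
rewrite (big_cat_nat _ (n := p.+1)) //=; last nat_lia.
rewrite prefix_d // (sumr_nat_const_in (c := q)) => [|m hm]; last by rewrite ifF //; nat_lia.
have np_gt0 : 0 < (n - p)%:R :> R by rewrite ltr0n subn_gt0.
by rewrite subSS -[X in _ + X]mulr_natr divfK ?gt_eqF // addNr.
Qed.

(* [lra] ignores section hypotheses: those it needs are restated with [have] below. *)
Variable eps : R.
Hypotheses (eps_gt0 : 0 < eps) (eps_gap : eps * (1 + q) <= y p - y n)
           (eps_half : eps * q <= (1 - 2 * y n) / 2).

Local Notation x := (perturb y eps d).

Let x_head m : (m <= p)%N -> x m = y m - eps.
Proof. by move=> mp; rewrite /perturb ifT // mulrN1. Qed.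

Let x_tail m : (p < m <= n)%N -> x m = y n + eps * q.
Proof. by move=> hm; rewrite /perturb ifF ?y_flat //; nat_lia. Qed.

Let x_le_y m : (1 <= m <= p)%N -> 0 <= x m <= y m.
Proof.
move=> hm; rewrite x_head; last nat_lia.
have ypm : y p <= y m by apply: (nonincr_nat_le y_nonincr); nat_lia.
have yn_ge0 : 0 <= y n by apply: inA_ge0 yA _; nat_lia.
have epsq_ge0 : 0 <= eps * q := mulr_ge0 (ltW eps_gt0) q_ge0.
have := eps_gap; rewrite mulrDr mulr1 => gap; have e0 := eps_gt0; apply/andP; split; lra.
Qed.

Let x_head_constraint j : (1 <= j <= p)%N -> constraint j x.
Proof.
move=> hj; rewrite /constraint (tail_perturb y eps _ sum_d) ?prefix_d; [|nat_lia..].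
have fk_le : fk j x <= fk j y.
  rewrite /fk big_nat_cond [X in _ <= X]big_nat_cond.
  by apply: ler_prod => m /andP[hm _]; apply: x_le_y; nat_lia.
apply: le_trans fk_le (le_trans (y_constraint _) _); first nat_lia.
by rewrite ler_wpM2l ?ler0n // mulrN opprK lerDl mulr_ge0 ?ler0n ?ltW.
Qed.

Lemma lower_head_inA : inA g n x.
Proof.
have yn_ge0 : 0 <= y n by apply: inA_ge0 yA _; nat_lia.
have c_ge0 : 0 <= y n + eps * q := addr_ge0 yn_ge0 (mulr_ge0 (ltW eps_gt0) q_ge0).
split.
- move=> j hj; case: (ltngtP j p) => [jp|pj|->].
  + by rewrite !x_head ?lerD2r ?y_nonincr //; nat_lia.
  + by rewrite !x_tail //; nat_lia.
  + rewrite x_tail ?x_head //; last nat_lia.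
    by have := eps_gap; rewrite mulrDr mulr1; lra.
- by rewrite x_tail //; nat_lia.
- by rewrite sum_perturb // y_sum.
move=> j hj; case: (leqP j p) => jp; first by apply: x_head_constraint; nat_lia.
have c_half : 2 * (y n + eps * q) <= 1 by have := eps_half; lra.
have p_cstr : constraint p x by apply: x_head_constraint; nat_lia.
by apply: (constraint_flat_tail p_cstr x_tail c_ge0 c_half); nat_lia.
Qed.

Lemma lower_head_fk_lt : fk k x < fk k y.
Proof.
apply: (prodr_nat_lt (p := k)) => [|m hm|m hm|]; first nat_lia.
- by apply: x_le_y; nat_lia.
- by apply: inA_gt0; nat_lia.
- by rewrite x_head //; have := eps_gt0; lra.
Qed.

End LowerHead.

Lemma minimizer_flat_start_le k i0 : minimizes_fk k y -> (1 <= k)%N -> (i0 <= n)%N ->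
  (forall m, (i0 <= m <= n)%N -> y m = y n) -> (forall j, (1 <= j < i0)%N -> y n < y j) ->
  (i0 <= k)%N.
Proof.
move=> y_min k_ge1 i0n flat above; rewrite leqNgt; apply/negP => ki0.
pose p := i0.-1; have [kp pn] : (k <= p)%N /\ (p < n)%N by rewrite /p; nat_lia.
have y_flat m : (p < m <= n)%N -> y m = y n by move=> hm; apply: flat; rewrite /p in hm; nat_lia.
have q_ge0 : 0 <= p%:R / (n - p)%:R :> R by rewrite divr_ge0 ?ler0n.
have q1_ge0 : 0 <= 1 + p%:R / (n - p)%:R :> R by lra.
have gap_gt0 : 0 < y p - y n by rewrite subr_gt0 above // /p; nat_lia.
have half_gt0 : 0 < (1 - 2 * y n) / 2 by have := inA_lt_half (j := n) ltac:(nat_lia); lra.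
have [eps eps_gt0 [eps_gap eps_half]] := near0_witness
  (near0_and (near0_mulr_le q1_ge0 gap_gt0) (near0_mulr_le q_ge0 half_gt0)).
have := y_min _ (lower_head_inA k_ge1 kp pn y_flat eps_gt0 eps_gap eps_half).
by rewrite leNgt (lower_head_fk_lt k_ge1 kp pn eps_gt0 eps_gap).
Qed.

Section BlockTransfer.
Variables (k i e : nat).
Hypotheses (i_ge1 : (1 <= i)%N) (ie : (i < e)%N) (ek : (e <= k)%N) (kn : (k <= n)%N).
Hypothesis en : (e < n)%N.
Hypothesis y_block : forall m, (i < m <= e)%N -> y m = y i.+1.

Local Notation d := (fun m => (m == i)%:R - (m == e)%:R : R).

Let prefix_d j : \sum_(1 <= m < j.+1) d m = (i <= j)%N%:R - (e <= j)%N%:R.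
Proof. by rewrite sumrB !sumr_nat_eq1 i_ge1 (ltn_trans i_ge1 ie). Qed.

Let sum_d : \sum_(1 <= m < n.+1) d m = 0.
Proof. by rewrite prefix_d (ltnW (ltn_trans ie en)) (ltnW en) subrr. Qed.

Let y_flat m : (i < m <= e)%N -> y m = y e.
Proof. by move=> hm; rewrite !y_block //; nat_lia. Qed.

Variable eps : R.
Hypotheses (eps_gt0 : 0 < eps) (eps_left : (1 < i)%N -> eps <= y i.-1 - y i).
Hypothesis eps_right : eps <= y e - y e.+1.
Hypothesis eps_slack : eps * (fk i.-1 y + g%:R) <= g%:R * tail i y - fk i y.
Hypothesis eps_block : eps * (1 - y e) <= y e * (1 - 2 * y e).

Local Notation x := (perturb y eps d).

Let x_other m : m != i -> m != e -> x m = y m.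
Proof. by move=> mi me; rewrite /perturb (negbTE mi) (negbTE me) subrr mulr0 addr0. Qed.

Let x_i : x i = y i + eps.
Proof. by rewrite /perturb eqxx (_ : i == e = false) ?subr0 ?mulr1 //; apply/eqP; nat_lia. Qed.

Let x_e : x e = y e - eps.
Proof. by rewrite /perturb eqxx (_ : e == i = false) ?sub0r ?mulrN1 //; apply/eqP; nat_lia. Qed.

Let x_nonincr j : (1 <= j < n)%N -> x j.+1 <= x j.
Proof.
move=> hj; have e0 := eps_gt0; have y_dec := y_nonincr hj.
have [ji|ji] := eqVneq j.+1 i.
  have h1i : (1 < i)%N by nat_lia.
  rewrite ji x_i x_other; [|apply/eqP; nat_lia..].
  by have := eps_left h1i; rewrite -ji /=; lra.
have [je|je] := eqVneq j e.
  by rewrite je x_e x_other; [have := eps_right; lra | apply/eqP; nat_lia..].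
have d_le : d j.+1 <= d j.
  rewrite (negbTE ji) (negbTE je) /= sub0r subr0.
  by apply: (le_trans _ (ler0n _ _)); rewrite oppr_le0 ler0n.
by rewrite /perturb lerD // ler_wpM2l // (ltW e0).
Qed.

Let x_ge0 m : (1 <= m <= n)%N -> 0 <= x m.
Proof.
move=> hm; apply: le_trans (_ : 0 <= x n) (nonincr_nat_le x_nonincr _ _); [|nat_lia..].
by rewrite x_other; [apply: inA_ge0 yA _ | apply/eqP | apply/eqP]; nat_lia.
Qed.

Local Notation rest j := (\prod_(1 <= m < j.+1 | (m != i) && (m != e)) y m).

Let fk_split j : (e <= j <= n)%N -> fk j x = x i * x e * rest j /\ fk j y = y i * y e * rest j.
Proof.
move=> hj; have [i_in e_in] : (1 <= i < j.+1)%N /\ (1 <= e < j.+1)%N by nat_lia.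
rewrite /fk !(prodr_nat_D2 _ i_in e_in) ?ltn_eqF //; split=> //; congr (_ * _).
by apply: eq_bigr => m /andP[mi me]; apply: x_other.
Qed.

Let rest_gt0 j : (j <= n)%N -> 0 < rest j.
Proof.
by move=> jn; rewrite big_nat_cond; apply: prodr_gt0 => m /andP[hm _]; apply: inA_gt0; nat_lia.
Qed.

Let transfer_lt : (y i + eps) * (y e - eps) < y i * y e.
Proof.
have e0 := eps_gt0; have : y e <= y i by rewrite -(y_flat (m := i.+1)) ?y_nonincr //; nat_lia.
rewrite -subr_gt0 (_ : _ - _ = eps * (y i - y e + eps)); last by ring.
by move=> ye_le; rewrite mulr_gt0 //; lra.
Qed.

Let tail_x j : (j <= n)%N -> tail j x = tail j y - eps * ((i <= j)%N%:R - (e <= j)%N%:R).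
Proof. by move=> jn; rewrite tail_perturb // prefix_d. Qed.

Let x_constraint_i : constraint i x.
Proof.
have fk_x : fk i x = fk i.-1 y * (y i + eps).
  rewrite -x_i -[in LHS](prednK i_ge1) fkS prednK //; congr (_ * _).
  by apply: eq_big_nat => m hm; apply: x_other; apply/eqP; nat_lia.
have fk_y : fk i y = fk i.-1 y * y i by rewrite -[in LHS](prednK i_ge1) fkS prednK.
have ei : (e <= i)%N = false by rewrite leqNgt ie.
rewrite /constraint tail_x ?ei ?leqnn /=; last nat_lia.
rewrite fk_x subr0 mulr1 -subr_ge0.
rewrite (_ : _ - _ = g%:R * tail i y - fk i y - eps * (fk i.-1 y + g%:R)).
  by rewrite subr_ge0.
by rewrite fk_y; ring.
Qed.

Let x_block_step l : (i < l < e)%N -> 0 <= x l /\ x l ^+ 2 <= tail l x * (1 - x l).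
Proof.
move=> hl; have e0 := eps_gt0.
have ye_gt0 : 0 < y e by apply: inA_gt0; nat_lia.
have ye_half : 2 * y e < 1 by apply: inA_lt_half; nat_lia.
have x_l : x l = y e by rewrite x_other ?y_flat //; try apply/eqP; nat_lia.
have next_ge : y e - eps <= x l.+1.
  have [->|le] := eqVneq l.+1 e; first by rewrite x_e.
  suff -> : x l.+1 = y e by lra.
  by rewrite x_other ?y_flat //; try apply/eqP; nat_lia.
have tail_ge : y e - eps <= tail l x.
  by apply: le_trans next_ge (tail_ge_next _ _) => [|m hm]; [nat_lia | apply: x_ge0; nat_lia].
have sq_le : y e ^+ 2 <= (y e - eps) * (1 - y e).
  rewrite -subr_ge0 (_ : _ - _ = y e * (1 - 2 * y e) - eps * (1 - y e)); last by ring.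
  by rewrite subr_ge0.
rewrite x_l; split; first exact: ltW.
by apply: le_trans sq_le _; rewrite ler_wpM2r //; lra.
Qed.

Let x_constraint j : (1 <= j < n)%N -> constraint j x.
Proof.
move=> hj; case: (ltngtP j i) => [ji|ij|->]; last exact: x_constraint_i.
  have [ij' ej'] : (i <= j)%N = false /\ (e <= j)%N = false by split; apply/negbTE; nat_lia.
  rewrite /constraint tail_x; last nat_lia.
  rewrite ij' ej' subrr mulr0 subr0.
  have -> : fk j x = fk j y by apply: eq_big_nat => m hm; apply: x_other; apply/eqP; nat_lia.
  exact: y_constraint.
have [je|ej] := ltnP j e.
  by apply: (constraint_propagate _ x_constraint_i x_block_step); nat_lia.
have ij' : (i <= j)%N by nat_lia.
rewrite /constraint tail_x; last nat_lia.
rewrite ij' ej subrr mulr0 subr0.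
have c_j := y_constraint hj; rewrite /constraint in c_j.
have [fk_x fk_y] := fk_split (j := j) ltac:(nat_lia).
rewrite fk_x; rewrite fk_y in c_j; apply: le_trans c_j.
by rewrite ler_wpM2r ?x_i ?x_e ?(ltW transfer_lt) // ltW // rest_gt0 //; nat_lia.
Qed.

Lemma block_transfer_inA : inA g n x.
Proof.
split; [exact: x_nonincr | apply: x_ge0; nat_lia | | exact: x_constraint].
by rewrite sum_perturb // y_sum.
Qed.

Lemma block_transfer_fk_lt : fk k x < fk k y.
Proof.
have [-> ->] := fk_split (j := k) ltac:(nat_lia).
by rewrite ltr_pM2r ?x_i ?x_e; [exact: transfer_lt | apply: rest_gt0; nat_lia].
Qed.

End BlockTransfer.

Lemma minimizer_no_slack_before_drop k i e : minimizes_fk k y ->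
  (1 <= i)%N -> (i < e)%N -> (e <= k <= n)%N -> (e < n)%N ->
  fk i y < g%:R * tail i y -> ((1 < i)%N -> y i < y i.-1) ->
  (forall m, (i < m <= e)%N -> y m = y i.+1) -> y e.+1 < y e -> False.
Proof.
move=> y_min i_ge1 ie /andP[ek kn] en slack drop_left block drop_right.
have ye_gt0 : 0 < y e by apply: inA_gt0; nat_lia.
have ye_half : 2 * y e < 1 by apply: inA_lt_half; nat_lia.
have gap_left : (1 < i)%N -> 0 < y i.-1 - y i by move=> /drop_left; rewrite subr_gt0.
have gap_right : 0 < y e - y e.+1 by rewrite subr_gt0.
have gap_slack : 0 < g%:R * tail i y - fk i y by rewrite subr_gt0.
have gap_block : 0 < y e * (1 - 2 * y e) by rewrite mulr_gt0 // subr_gt0.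
have K_slack : 0 <= fk i.-1 y + g%:R.
  by rewrite addr_ge0 ?ler0n // prodr_nat_ge0 // => m hm; apply/ltW/inA_gt0; nat_lia.
have K_block : 0 <= 1 - y e by lra.
have [eps eps_gt0 [[[eps_left eps_right] eps_slack] eps_block]] := near0_witness (near0_and
  (near0_and (near0_and (near0_impl (fun h => near0_le (gap_left h))) (near0_le gap_right))
             (near0_mulr_le K_slack gap_slack))
  (near0_mulr_le K_block gap_block)).
have := y_min _ (block_transfer_inA i_ge1 ie ek kn en block eps_gt0 eps_left eps_right
  eps_slack eps_block).
by rewrite leNgt (block_transfer_fk_lt i_ge1 ie ek kn en block eps_gt0).
Qed.

Section TailExchange.
Variables (k i : nat).
Hypotheses (i_ge1 : (1 <= i)%N) (ik : (i < k)%N) (kn : (k <= n)%N).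
Hypothesis y_flat : forall m, (i < m <= n)%N -> y m = y n.

Local Notation M := ((n - i)%:R : R).
Local Notation d := (fun m => if (m < i)%N then 0 else if m == i then M else -1 : R).

Let prefix_d_lt j : (j <= i)%N -> \sum_(1 <= m < j) d m = 0.
Proof.
by move=> ji; rewrite big1_seq // => m; rewrite mem_index_iota => hm; rewrite ifT //; nat_lia.
Qed.

Let prefix_d_i : \sum_(1 <= m < i.+1) d m = M.
Proof. by rewrite big_nat_recr //= prefix_d_lt // ltnn eqxx add0r. Qed.

Let sum_d : \sum_(1 <= m < n.+1) d m = 0.
Proof.
rewrite (big_cat_nat _ (n := i.+1)) //= ?prefix_d_i; [|nat_lia..].
rewrite (sumr_nat_const_in (c := -1)) => [|m hm].
  by rewrite subSS mulNrn subrr.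
by rewrite ifF ?ifF //; apply/negbTE; nat_lia.
Qed.

Variable eps : R.
Hypotheses (eps_gt0 : 0 < eps) (eps_left : (1 < i)%N -> eps * M <= y i.-1 - y i).
Hypotheses (eps_right : eps * (M + 1) <= y i - y n) (eps_pos : eps <= y n).
Hypothesis eps_slack : eps * (M * (fk i.-1 y + g%:R)) <= g%:R * tail i y - fk i y.
Hypothesis eps_half : eps <= (1 - 2 * y n) / 2.

Section Admissible.
Variable t : R.
Hypothesis t_small : `|t| <= eps.

Local Notation x := (perturb y t d).

Let bound K : 0 <= K -> t * K <= eps * K /\ - t * K <= eps * K.
Proof. by move=> K_ge0; rewrite !ler_mul_norm // normrN. Qed.

Let x_lo m : (m < i)%N -> x m = y m.
Proof. by move=> mi; rewrite /perturb ifT // mulr0 addr0. Qed.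

Let x_i : x i = y i + t * M.
Proof. by rewrite /perturb ltnn eqxx. Qed.

Let x_hi m : (i < m <= n)%N -> x m = y n - t.
Proof. by move=> hm; rewrite /perturb ifF ?ifF ?y_flat ?mulrN1 //; apply/negbTE; nat_lia. Qed.

Let M_ge0 : 0 <= M. Proof. exact: ler0n. Qed.

Let x_nonincr j : (1 <= j < n)%N -> x j.+1 <= x j.
Proof.
move=> hj; case: (ltngtP j.+1 i) => [ji|ij|ji].
- by rewrite !x_lo ?y_nonincr //; nat_lia.
- have [->|neq] := eqVneq j i; last by rewrite !x_hi //; nat_lia.
  rewrite x_i x_hi; last nat_lia.
  have [_ mtK] := bound (addr_ge0 M_ge0 ler01).
  by have := eps_right; lra.
- have h1i : (1 < i)%N by nat_lia.
  rewrite ji x_i x_lo; last nat_lia.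
  have [tM _] := bound M_ge0; have := eps_left h1i.
  by rewrite (_ : i.-1 = j); [lra | nat_lia].
Qed.

Let x_constraint_i : constraint i x.
Proof.
have fk_x : fk i x = fk i.-1 y * (y i + t * M).
  rewrite -x_i -[in LHS](prednK i_ge1) fkS prednK //; congr (_ * _).
  by apply: eq_big_nat => m hm; apply: x_lo; nat_lia.
have fk_y : fk i y = fk i.-1 y * y i by rewrite -[in LHS](prednK i_ge1) fkS prednK.
have K_ge0 : 0 <= M * (fk i.-1 y + g%:R).
  by rewrite mulr_ge0 // addr_ge0 ?ler0n // prodr_nat_ge0 // => m hm; apply/ltW/inA_gt0; nat_lia.
have [tK _] := bound K_ge0.
rewrite /constraint tail_perturb ?prefix_d_i ?fk_x //; last nat_lia.
rewrite -subr_ge0 (_ : _ - _ = g%:R * tail i y - fk i y - t * (M * (fk i.-1 y + g%:R))).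
  by rewrite subr_ge0; apply: le_trans tK eps_slack.
by rewrite fk_y; ring.
Qed.

Lemma tail_exchange_inA : inA g n x.
Proof.
have [t_le mt_le] := bound ler01; rewrite !mulr1 in t_le mt_le.
have c_ge0 : 0 <= y n - t by have := eps_pos; lra.
split; [exact: x_nonincr | by rewrite x_hi //; nat_lia | by rewrite sum_perturb // y_sum |].
move=> j hj; change (constraint j x); case: (ltngtP j i) => [ji|ij|->]; last exact: x_constraint_i.
  rewrite /constraint (tail_perturb _ _ _ sum_d) ?prefix_d_lt ?mulr0 ?subr0; [|nat_lia..].
  have -> : fk j x = fk j y by apply: eq_big_nat => m hm; apply: x_lo; nat_lia.
  exact: y_constraint.
apply: (constraint_flat_tail x_constraint_i x_hi c_ge0); last nat_lia.
by have := eps_half; lra.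
Qed.

End Admissible.

(* Factorwise [(y_m + eps d_m) (y_m - eps d_m) = y_m^2 - (eps d_m)^2], strictly less at [m = i]. *)
Lemma tail_exchange_fk_lt :
  fk k (perturb y eps d) * fk k (perturb y (- eps) d) < fk k y ^+ 2.
Proof.
have eps_abs : `|eps| <= eps by rewrite ger0_norm // ltW.
have xpA := tail_exchange_inA eps_abs.
have xmA : inA g n (perturb y (- eps) d) by apply: tail_exchange_inA; rewrite normrN.
rewrite expr2 /fk -!big_split /=.
apply: (prodr_nat_lt (p := i)) => [|m hm|m hm|]; first nat_lia.
- apply/andP; split.
    by apply: mulr_ge0; [apply: (inA_ge0 xpA) | apply: (inA_ge0 xmA)]; nat_lia.
  rewrite (_ : _ * _ = y m * y m - (eps * d m) ^+ 2); last first.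
    by rewrite /perturb /=; set a := (if _ then _ else _); ring.
  by rewrite lerBlDr lerDl sqr_ge0.
- by rewrite mulr_gt0 ?inA_gt0 //; nat_lia.
rewrite (_ : _ * _ = y i * y i - (eps * M) ^+ 2); last first.
  by rewrite /perturb ltnn eqxx; set a := M; ring.
by rewrite ltrBlDr ltrDl exprn_gt0 // mulr_gt0 // ltr0n subn_gt0; nat_lia.
Qed.

End TailExchange.

Lemma minimizer_no_slack_before_flat_tail k i : minimizes_fk k y ->
  (1 <= i)%N -> (i < k <= n)%N -> fk i y < g%:R * tail i y ->
  ((1 < i)%N -> y i < y i.-1) -> (forall m, (i < m <= n)%N -> y m = y n) -> y n < y i -> False.
Proof.
move=> y_min i_ge1 /andP[ik kn] slack drop_left flat drop.
have yn_gt0 : 0 < y n by apply: inA_gt0; nat_lia.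
have yn_half : 2 * y n < 1 by apply: inA_lt_half; nat_lia.
have gap_left : (1 < i)%N -> 0 < y i.-1 - y i by move=> /drop_left; rewrite subr_gt0.
have gap_right : 0 < y i - y n by rewrite subr_gt0.
have gap_slack : 0 < g%:R * tail i y - fk i y by rewrite subr_gt0.
have gap_half : 0 < (1 - 2 * y n) / 2 by lra.
have M_ge0 : 0 <= (n - i)%:R :> R := ler0n _ _.
have K_right : 0 <= (n - i)%:R + 1 :> R by rewrite addr_ge0.
have K_slack : 0 <= (n - i)%:R * (fk i.-1 y + g%:R).
  by rewrite mulr_ge0 // addr_ge0 ?ler0n // prodr_nat_ge0 // => m hm; apply/ltW/inA_gt0; nat_lia.
have [eps eps_gt0 [[[[eps_left eps_right] eps_pos] eps_slack] eps_half]] := near0_witness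
  (near0_and (near0_and (near0_and (near0_and
    (near0_impl (fun h => near0_mulr_le M_ge0 (gap_left h))) (near0_mulr_le K_right gap_right))
    (near0_le yn_gt0)) (near0_mulr_le K_slack gap_slack)) (near0_le gap_half)).
have eps_abs : `|eps| <= eps by rewrite ger0_norm // ltW.
have := tail_exchange_inA i_ge1 ik kn flat eps_left eps_right eps_pos eps_slack eps_half.
move=> /[dup] /(_ eps eps_abs) /y_min min_p.
move=> /(_ (- eps)); rewrite normrN => /(_ eps_abs) /y_min min_m.
have fky_ge0 : 0 <= fk k y by apply: prodr_nat_ge0 => m hm; apply/ltW/inA_gt0; nat_lia.
have := ler_pM fky_ge0 fky_ge0 min_p min_m.
by rewrite -expr2 leNgt (tail_exchange_fk_lt i_ge1 ik kn flat eps_gt0 eps_left eps_right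
  eps_pos eps_slack eps_half).
Qed.

Lemma minimizer_tight_before k i0 : minimizes_fk k y -> (i0 <= k)%N -> (k <= n)%N ->
  (forall m, (i0 <= m <= n)%N -> y m = y n) -> (forall j, (1 <= j < i0)%N -> y n < y j) ->
  forall i, (1 <= i < i0)%N -> fk i y = g%:R * tail i y.
Proof.
move=> y_min i0k kn flat above; elim/ltn_ind=> i IH hi.
apply/eqP; apply: contraT => not_tight; exfalso.
have slack : fk i y < g%:R * tail i y.
  by rewrite lt_neqAle not_tight; apply: y_constraint; nat_lia.
have drop_left : (1 < i)%N -> y i < y i.-1.
  move=> h1i; have hj : (1 <= i.-1 < n)%N by nat_lia.
  have tight : fk i.-1 y = g%:R * tail i.-1 y by apply: IH; nat_lia.
  by have := inA_tight_lt hj tight; rewrite prednK //; nat_lia.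
have [top|not_top] := eqVneq (y i.+1) (y n).
  apply: (minimizer_no_slack_before_flat_tail y_min _ _ slack drop_left); [nat_lia | nat_lia | |].
    move=> m hm; apply/eqP; rewrite eq_le -{1}top.
    by rewrite !(nonincr_nat_le y_nonincr) //; nat_lia.
  by apply: above; nat_lia.
have y_dec j : (i.+1 <= j < n)%N -> y j.+1 <= y j by move=> hj; apply: y_nonincr; nat_lia.
have [flat_n|[e he [block drop_e]]] := nonincr_flat_or_drop y_dec.
  by move: not_top; rewrite -(flat_n n) ?eqxx //; nat_lia.
have ei0 : (e < i0)%N.
  rewrite ltnNge; apply/negP => i0e.
  by move: not_top; rewrite -(block e) ?flat ?eqxx //; nat_lia.
apply: (minimizer_no_slack_before_drop y_min _ _ _ _ slack drop_left block drop_e); nat_lia.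
Qed.

End PointsOfA.
End Constraints.

Unset Implicit Arguments. Set Strict Implicit.

Theorem lemma3p9 (R : realType) (g n k : nat) (y : nat -> R) (i0 : nat) :
  (1 <= g)%N -> (3 <= n)%N -> (1 <= k <= n)%N ->
  inA g n y ->
  (forall x : nat -> R, inA g n x -> fk k y <= fk k x) ->
  (1 <= i0 <= n)%N -> y i0 = y n ->
  (forall j, (1 <= j < i0)%N -> y j != y n) ->
  [/\ (i0 <= k)%N,
      (forall i, (1 <= i < i0)%N -> y i.+1 < y i)
    & (forall i, (1 <= i < i0)%N ->
         fk i y = g%:R * \sum_(i.+1 <= j < n.+1) y j)].
Proof.
move=> g_ge1 n_ge3 /andP[k_ge1 kn] yA y_min /andP[i0_ge1 i0n] y_i0 y_ne.
have [y_dec _ _ _] := yA.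
have flat m : (i0 <= m <= n)%N -> y m = y n.
  move=> hm; apply/eqP; rewrite eq_le -{1}y_i0 !(nonincr_nat_le y_dec) //; lia.
have above j : (1 <= j < i0)%N -> y n < y j.
  by move=> hj; rewrite lt_neqAle eq_sym y_ne // (nonincr_nat_le y_dec) //; lia.
have i0k := minimizer_flat_start_le g_ge1 n_ge3 yA y_min k_ge1 i0n flat above.
have tight := minimizer_tight_before g_ge1 n_ge3 yA y_min i0k kn flat above.
split=> // i hi; apply: (inA_tight_lt g_ge1 n_ge3 yA); [lia | exact: tight].
Qed.
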